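(* Let $Z_2=(X_2,Y_2)$ be the planar piecewise smooth vector field with $X_2(x,y)=\left(1,\tfrac{x}{2}-4x^3\right)$ for $y\ge 0$ and $Y_2(x,y)=\left(-1,\tfrac{x}{2}-4x^3\right)$ for $y\le 0$, and let $$\Lambda_2=\left\{\left(x,\tfrac{x^2}{4}-x^4\right): -\tfrac12\le x\le \tfrac12\right\}\cup\left\{\left(x,-\left(\tfrac{x^2}{4}-x^4\right)\right): -\tfrac12\le x\le \tfrac12\right\}.$$ Then $\Lambda_2$ is a compact set invariant under $Z_2$, and the time-one map of $Z_2$ restricted to $\Lambda_2$, i.e. the map $\overline{T_1}$ on the metric space $(\overline{\Omega}_2,\rho_2)$ defined below, is topologically conjugate to the full two-sided shift on two symbols: there is a homeomorphism $h:\overline{\Omega}_2\to\{0,1\}^{\mathbb{Z}}$ with $h\circ\overline{T_1}=\sigma\circ h$.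
   Context: Switching manifold $\Sigma=\{(x,y):y=0\}=f^{-1}(0)$ with $f(x,y)=y$, $\Sigma^+=\{y\ge0\}$, $\Sigma^-=\{y\le0\}$. A planar piecewise smooth vector field (PSVF) $Z=(X,Y)$ equals the smooth field $X$ on $\Sigma^+$ and the smooth field $Y$ on $\Sigma^-$. Write $Wf(p)=\langle\nabla f(p),W(p)\rangle$, $W^2f(p)=\langle\nabla(Wf)(p),W(p)\rangle$. Regions of $\Sigma$: crossing $\Sigma^c=\{Xf\cdot Yf>0\}$, split into $\Sigma^{c+}$ ($Xf,Yf>0$) and $\Sigma^{c-}$ ($Xf,Yf<0$); sliding $\Sigma^s=\{Xf<0<Yf\}$; escaping $\Sigma^e=\{Yf<0<Xf\}$. A point $p\in\Sigma$ with $Xf(p)=0$ is a tangential singularity of $X$; it is a fold of $X$ if $X^2f(p)\neq0$, visible if $X^2f(p)>0$, invisible if $X^2f(p)<0$; for $Y$, a fold is visible if the $Y$-orbit of $p$ lies locally in $\Sigma^-$ ($Y^2f(p)<0$) and invisible otherwise. A two-fold is a fold of both $X$ and $Y$ (visible-visible if visible for both). A tangential singularity is singular if it is an invisible tangency of both $X$ and $Y$, regular otherwise. On $\overline{\Sigma^s\cup\Sigma^e}$ the sliding field is $Z^T=(Yf\,X-Xf\,Y)/(Yf-Xf)$. Local trajectories (Filippov convention): off $\Sigma$ follow $X$ (if $y>0$) or $Y$ (if $y<0$); through $p\in\Sigma^{c+}$ follow $Y$ for $t\le0$ and $X$ for $t\ge0$ (time-reversed for $\Sigma^{c-}$); through $p\in\Sigma^e$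 follow $Z^T$ for $t\le0$ and any one of $X,Y,Z^T$ for $t\ge0$ (time-reversed for $\Sigma^s$); through a regular tangential singularity follow one of the flows of $X,Y,Z^T$ for $t\le0$ and one of them for $t\ge0$; a singular tangential singularity is stationary. A global trajectory is a map $\gamma:\mathbb{R}\to\mathbb{R}^2$ obtained by concatenating orientation-preserving local trajectories $\sigma_i$ on intervals $[t_i,t_{i+1}]$, $i\in\mathbb{Z}$, with $\sigma_i(t_{i+1})=\sigma_{i+1}(t_{i+1})$ and $t_i\to\pm\infty$ as $i\to\pm\infty$. A set $\Lambda$ is invariant for $Z$ if every global trajectory $\gamma$ with $\gamma(0)\in\Lambda$ satisfies $\gamma(\mathbb{R})\subset\Lambda$. Construction: let $P(x)=\frac{x^2}{4}-x^4$, $p_1=0$. $\Omega_2$ is the set of global trajectories $\gamma$ of $Z_2$ with $\gamma(0)\in\Lambda_2$; the time-one map is $T_1:\Omega_2\to\Omega_2$, $T_1(\gamma)(t)=\gamma(t+1)$. Arcs: $I_0=\{(x,\pm P(x)): -\frac12\le x<0\}$, $I_1=\{(x,\pm P(x)): 0<x\le\frac12\}$. Itinerary $s:\Omega_2\to\{0,1\}^{\mathbb{Z}}$: $s(\gamma)_j=n$ if $\gamma(j)\in I_n$, and $s(\gamma)_j=m$ if $\gamma(j)=(0,0)$ and $\gamma(j+\frac12)\in I_m$. Set $\gamma_1\sim\gamma_2$ iff $s(\gamma_1)=s(\gamma_2)$ and $\overline{\Omega}_2=\Omega_2/\sim$. Each class $\overline\gamma$ contains a representative $\gamma^*$ with $\gamma^*(0)=(0,0)$;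 define $\rho_2(\overline{\gamma}_1,\overline{\gamma}_2)=\sum_{i\in\mathbb{Z}}2^{-|i|}d_H(\gamma_1^*([i,i+1]),\gamma_2^*([i,i+1]))$, $d_H$ the Hausdorff distance for the Euclidean metric and $\gamma_i^*$ such representatives. $\overline{T_1}(\overline\gamma)=\overline{T_1(\gamma)}$ (well defined). On $\{0,1\}^{\mathbb{Z}}$ use the product of discrete topologies and the shift $\sigma((a_j)_j)=(a_{j+1})_j$. *)

From Stdlib Require Import Reals Lra ZArith List ClassicalEpsilon.
From Coquelicot Require Import Coquelicot.
Open Scope R_scope.

Definition pt := (R * R)%type.
Definition vf := pt -> pt.

Definition dist2 (p q : pt) : R :=
  sqrt ((fst p - fst q) ^ 2 + (snd p - snd q) ^ 2).

(** Switching function f(x,y) = y: grad f = (0,1). *)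
Definition Wf (W : vf) (p : pt) : R := snd (W p).

Definition W2f (W : vf) (p : pt) : R :=
  Derive (fun s => Wf W (s, snd p)) (fst p) * fst (W p)
  + Derive (fun s => Wf W (fst p, s)) (snd p) * snd (W p).

Section PSVF.
Variables X Y : vf.

Definition onSigma (p : pt) : Prop := snd p = 0.
Definition crossing_plus (p : pt) : Prop := onSigma p /\ 0 < Wf X p /\ 0 < Wf Y p.
Definition crossing_minus (p : pt) : Prop := onSigma p /\ Wf X p < 0 /\ Wf Y p < 0.
Definition sliding (p : pt) : Prop := onSigma p /\ Wf X p < 0 /\ 0 < Wf Y p.
Definition escaping (p : pt) : Prop := onSigma p /\ Wf Y p < 0 /\ 0 < Wf X p.

Definition tangential (p : pt) : Prop := onSigma p /\ (Wf X p = 0 \/ Wf Y p = 0).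
Definition invisible_X (p : pt) : Prop := onSigma p /\ Wf X p = 0 /\ W2f X p < 0.
Definition invisible_Y (p : pt) : Prop := onSigma p /\ Wf Y p = 0 /\ 0 < W2f Y p.
Definition singular_tang (p : pt) : Prop := invisible_X p /\ invisible_Y p.
Definition regular_tang (p : pt) : Prop := tangential p /\ ~ singular_tang p.

Definition ZT (p : pt) : pt :=
  ((Wf Y p * fst (X p) - Wf X p * fst (Y p)) / (Wf Y p - Wf X p),
   (Wf Y p * snd (X p) - Wf X p * snd (Y p)) / (Wf Y p - Wf X p)).

Definition SE_closure (p : pt) : Prop :=
  forall eps, 0 < eps -> exists q, (sliding q \/ escaping q) /\ dist2 p q < eps.
End PSVF.

Definition cont_on (phi : R -> pt) (a b : R) : Prop :=
  forall t, a <= t <= b -> forall eps, 0 < eps -> exists delta, 0 < delta /\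
    forall s, a <= s <= b -> Rabs (s - t) < delta -> dist2 (phi s) (phi t) < eps.

Definition solves (W : vf) (phi : R -> pt) (a b : R) : Prop :=
  cont_on phi a b /\
  forall t, a < t < b ->
    is_derive (fun s => fst (phi s)) t (fst (W (phi t))) /\
    is_derive (fun s => snd (phi s)) t (snd (W (phi t))).

Inductive flowkind := KX | KY | KT.

Definition piece (X Y : vf) (k : flowkind) (phi : R -> pt) (a b : R) : Prop :=
  match k with
  | KX => solves X phi a b /\ forall t, a <= t <= b -> 0 <= snd (phi t)
  | KY => solves Y phi a b /\ forall t, a <= t <= b -> snd (phi t) <= 0
  | KT => solves (ZT X Y) phi a b /\ forall t, a <= t <= b -> SE_closure X Y (phi t)
  end.

(** admissible (backward, forward) flows through p (Filippov convention) *)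
Definition allowed (X Y : vf) (p : pt) (k1 k2 : flowkind) : Prop :=
  (0 < snd p /\ k1 = KX /\ k2 = KX) \/
  (snd p < 0 /\ k1 = KY /\ k2 = KY) \/
  (crossing_plus X Y p /\ k1 = KY /\ k2 = KX) \/
  (crossing_minus X Y p /\ k1 = KX /\ k2 = KY) \/
  (escaping X Y p /\ k1 = KT) \/
  (sliding X Y p /\ k2 = KT) \/
  regular_tang X Y p.

Definition local_traj (X Y : vf) (phi : R -> pt) (p : pt) (a b : R) : Prop :=
  a <= 0 <= b /\ phi 0 = p /\
  ((singular_tang X Y p /\ forall t, a <= t <= b -> phi t = p) \/
   (~ singular_tang X Y p /\ exists k1 k2,
       piece X Y k1 phi a 0 /\ piece X Y k2 phi 0 b /\ allowed X Y p k1 k2)).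

Definition global_traj (X Y : vf) (gamma : R -> pt) : Prop :=
  exists (t : Z -> R) (sigma : Z -> R -> pt),
    (forall i, t i < t (i + 1)%Z) /\
    (forall M, exists i, M < t i) /\ (forall M, exists i, t i < M) /\
    (forall i, exists tau, t i <= tau <= t (i + 1)%Z /\
        local_traj X Y (fun s => sigma i (s + tau)) (sigma i tau)
                   (t i - tau) (t (i + 1)%Z - tau)) /\
    (forall i, sigma i (t (i + 1)%Z) = sigma (i + 1)%Z (t (i + 1)%Z)) /\
    (forall i s, t i <= s <= t (i + 1)%Z -> gamma s = sigma i s).

Definition invariant (X Y : vf) (L : pt -> Prop) : Prop :=
  forall gamma, global_traj X Y gamma -> L (gamma 0) -> forall t, L (gamma t).

Definition open2 (U : pt -> Prop) : Prop :=
  forall p, U p -> exists eps, 0 < eps /\ forall q, dist2 p q < eps -> U q.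
Definition compact2 (K : pt -> Prop) : Prop :=
  forall (I : Type) (U : I -> pt -> Prop), (forall i, open2 (U i)) ->
    (forall p, K p -> exists i, U i p) ->
    exists l : list I, forall p, K p -> exists i, In i l /\ U i p.

Definition P (x : R) : R := x ^ 2 / 4 - x ^ 4.
Definition X2 : vf := fun p => (1, fst p / 2 - 4 * fst p ^ 3).
Definition Y2 : vf := fun p => (-1, fst p / 2 - 4 * fst p ^ 3).

Definition Lambda2 (p : pt) : Prop :=
  -1/2 <= fst p <= 1/2 /\ (snd p = P (fst p) \/ snd p = - P (fst p)).

Definition I0 (p : pt) : Prop :=
  -1/2 <= fst p < 0 /\ (snd p = P (fst p) \/ snd p = - P (fst p)).
Definition I1 (p : pt) : Prop :=
  0 < fst p <= 1/2 /\ (snd p = P (fst p) \/ snd p = - P (fst p)).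

Definition origin : pt := (0, 0).

Definition Omega2 (gamma : R -> pt) : Prop :=
  global_traj X2 Y2 gamma /\ Lambda2 (gamma 0).

Definition T1 (gamma : R -> pt) : R -> pt := fun t => gamma (t + 1).

(** itinerary; the symbol 0 is [false], 1 is [true] *)
Definition itin (gamma : R -> pt) (j : Z) : bool :=
  if excluded_middle_informative
       (I1 (gamma (IZR j)) \/
        (gamma (IZR j) = origin /\ I1 (gamma (IZR j + 1/2))))
  then true else false.

Definition cls (gamma : R -> pt) : (R -> pt) -> Prop :=
  fun g => Omega2 g /\ itin g = itin gamma.

Definition IsClass (S : (R -> pt) -> Prop) : Prop :=
  exists gamma, Omega2 gamma /\ S = cls gamma.

Definition OmegaBar := { S : (R -> pt) -> Prop | IsClass S }.

Definition rep0 (c : OmegaBar) : R -> pt :=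
  epsilon (inhabits (fun _ : R => origin))
          (fun g => proj1_sig c g /\ g 0 = origin).

Definition dpt (p : pt) (B : pt -> Prop) : R :=
  real (Glb_Rbar (fun r => exists b, B b /\ r = dist2 p b)).
Definition hsemi (A B : pt -> Prop) : R :=
  real (Lub_Rbar (fun r => exists a, A a /\ r = dpt a B)).
Definition dH (A B : pt -> Prop) : R := Rmax (hsemi A B) (hsemi B A).

Definition img (gamma : R -> pt) (i : Z) : pt -> Prop :=
  fun p => exists s, IZR i <= s <= IZR i + 1 /\ p = gamma s.

Definition dterm (c1 c2 : OmegaBar) (i : Z) : R :=
  dH (img (rep0 c1) i) (img (rep0 c2) i).

(** rho2 = sum_{i in Z} 2^{-|i|} d_H(...) split as i >= 0 and i <= -1 *)
Definition rho2 (c1 c2 : OmegaBar) : R :=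
  Series (fun n => (/2) ^ n * dterm c1 c2 (Z.of_nat n)) +
  Series (fun n => (/2) ^ (S n) * dterm c1 c2 (- Z.of_nat (S n))%Z).

Definition shift2 (a : Z -> bool) : Z -> bool := fun j => a (j + 1)%Z.

(** continuity for rho2 on OmegaBar and the product (of discrete) topology *)
Definition cont_to_seq (h : OmegaBar -> Z -> bool) : Prop :=
  forall c (N : nat), exists delta, 0 < delta /\
    forall c', rho2 c c' < delta ->
      forall j, (Z.abs j <= Z.of_nat N)%Z -> h c' j = h c j.
Definition cont_from_seq (g : (Z -> bool) -> OmegaBar) : Prop :=
  forall a eps, 0 < eps -> exists N : nat,
    forall b, (forall j, (Z.abs j <= Z.of_nat N)%Z -> b j = a j) ->
      rho2 (g a) (g b) < eps.

Definition homeomorphism (h : OmegaBar -> Z -> bool) : Prop :=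
  exists g : (Z -> bool) -> OmegaBar,
    (forall c, g (h c) = c) /\ (forall a, h (g a) = a) /\
    cont_to_seq h /\ cont_from_seq g.

From Stdlib Require Import Reals ZArith.
From Coquelicot Require Import Coquelicot.
From Stdlib Require Import Lra Lia List ClassicalEpsilon Classical.
From Stdlib Require Import FunctionalExtensionality PropExtensionality ProofIrrelevance.
Open Scope R_scope.

(* Lambda2 is a figure eight made of the upper arcs y = P x, along which both fields move
   x forward at unit speed, and the lower arcs y = -P x, along which they move it backward.
   Since Xf = Yf there is no sliding or escaping region, and Lambda2 meets Sigma only at
   (0,0) and (±1/2,0), which are visible folds; so every solution piece starting on
   Lambda2 runs along it, and the phase (x mod 1 on the upper arcs, -x mod 1 on the lower
   ones) grows at unit speed along every global trajectory.  A trajectory at the origin at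
   time 0 is then back there at each integer time j and runs once around the right or the
   left loop during [j, j+1]: this is its symbol s_j, and conversely every sequence of
   loops is a global trajectory.  The Hausdorff term of rho2 at index i is 0 or at least
   1/2 according as the symbols at i agree, which makes the itinerary a homeomorphism. *)

Lemma dist2_nonneg p q : 0 <= dist2 p q.
Proof. apply sqrt_pos. Qed.

Lemma dist2_refl p : dist2 p p = 0.
Proof.
  unfold dist2. replace ((fst p - fst p) ^ 2 + (snd p - snd p) ^ 2) with 0 by ring.
  apply sqrt_0.
Qed.

Lemma dist2_sym p q : dist2 p q = dist2 q p.
Proof. unfold dist2. f_equal. ring. Qed.

Lemma Rabs_fst_le_dist2 p q : Rabs (fst p - fst q) <= dist2 p q.
Proof.
  unfold dist2. rewrite <- sqrt_Rsqr_abs. apply sqrt_le_1_alt. unfold Rsqr.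
  pose proof (pow2_ge_0 (snd p - snd q)). simpl. lra.
Qed.

Lemma Rabs_snd_le_dist2 p q : Rabs (snd p - snd q) <= dist2 p q.
Proof.
  unfold dist2. rewrite <- sqrt_Rsqr_abs. apply sqrt_le_1_alt. unfold Rsqr.
  pose proof (pow2_ge_0 (fst p - fst q)). simpl. lra.
Qed.

Lemma dist2_le_Rabs p q : dist2 p q <= Rabs (fst p - fst q) + Rabs (snd p - snd q).
Proof.
  unfold dist2. set (a := fst p - fst q). set (b := snd p - snd q).
  pose proof (Rabs_pos a). pose proof (Rabs_pos b).
  rewrite <- (sqrt_pow2 (Rabs a + Rabs b)) by lra. apply sqrt_le_1_alt.
  replace ((Rabs a + Rabs b) ^ 2) with (Rabs a ^ 2 + Rabs b ^ 2 + 2 * Rabs a * Rabs b) by ring.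
  rewrite !pow2_abs. nra.
Qed.

Definition dP (x : R) : R := x / 2 - 4 * x ^ 3.

Lemma is_derive_P x : is_derive P x (dP x).
Proof. unfold P, dP. auto_derive; [easy | field]. Qed.

Lemma P_opp x : P (- x) = P x.
Proof. unfold P. field. Qed.

Lemma P_ge0_iff x : 0 <= P x <-> -1/2 <= x <= 1/2.
Proof.
  unfold P. replace (x ^ 2 / 4 - x ^ 4) with ((x * x) * (1/4 - x * x)) by field.
  split; intros H.
  - destruct (Req_dec x 0) as [-> | Hx]; [lra |].
    assert (0 < x * x) by (apply Rsqr_pos_lt; exact Hx).
    assert (0 <= 1/4 - x * x) by (apply (Rmult_le_reg_l (x * x)); lra).
    split; nra.
  - apply Rmult_le_pos; nra.
Qed.

Lemma P_eq0 x : P x = 0 -> x = 0 \/ x = 1/2 \/ x = -(1/2).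
Proof.
  intros H.
  assert (E : (x * x) * ((x - 1/2) * (x + 1/2)) = 0)
    by (replace ((x * x) * ((x - 1/2) * (x + 1/2))) with (- P x) by (unfold P; field); lra).
  destruct (Rmult_integral _ _ E) as [E1 | E1]; destruct (Rmult_integral _ _ E1); lra.
Qed.

Lemma P_half : P (1/2) = 0.
Proof. unfold P. field. Qed.

Lemma P_0 : P 0 = 0.
Proof. unfold P. field. Qed.

Lemma P_quarter_pos : 0 < P (1/4).
Proof. unfold P. lra. Qed.

Lemma P_le1 x : -1/2 <= x <= 1/2 -> P x <= 1.
Proof. intros Hx. unfold P. nra. Qed.

Lemma P_lipschitz x y : -1/2 <= x <= 1/2 -> -1/2 <= y <= 1/2 ->
  Rabs (P x - P y) <= Rabs (x - y).
Proof.
  intros Hx Hy.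
  replace (P x - P y) with ((x - y) * ((x + y) * (1/4 - x * x - y * y))) by (unfold P; field).
  rewrite !Rabs_mult. rewrite <- (Rmult_1_r (Rabs (x - y))) at 2.
  apply Rmult_le_compat_l; [apply Rabs_pos |].
  assert (Rabs (x + y) <= 1) by (split_Rabs; lra).
  assert (Rabs (1/4 - x * x - y * y) <= 1) by (split_Rabs; nra).
  pose proof (Rabs_pos (x + y)). pose proof (Rabs_pos (1/4 - x * x - y * y)). nra.
Qed.

(** * Compactness of [Lambda2] *)

Lemma cont_on_open_nbhd (f : R -> pt) (a b : R) (U : pt -> Prop) z :
  cont_on f a b -> a <= z <= b -> open2 U -> U (f z) ->
  exists d, 0 < d /\ forall y, a <= y <= b -> Rabs (y - z) < d -> U (f y).
Proof.
  intros Hf Hz HU Hfz. destruct (HU _ Hfz) as [e [He Hball]].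
  destruct (Hf z Hz e He) as [d [Hd Hclose]].
  exists d. split; [exact Hd |]. intros y Hy Hyz. apply Hball. rewrite dist2_sym. auto.
Qed.

Lemma compact2_interval_image (f : R -> pt) (a b : R) : a <= b -> cont_on f a b ->
  compact2 (fun p => exists x, a <= x <= b /\ p = f x).
Proof.
  intros Hab Hf I U HU Hcov.
  assert (Hloc : forall z, a <= z <= b -> exists d i, 0 < d /\
            forall y, a <= y <= b -> Rabs (y - z) < d -> U i (f y)).
  { intros z Hz. destruct (Hcov (f z)) as [i Hi]; [eauto |].
    destruct (cont_on_open_nbhd f a b (U i) z Hf Hz (HU i) Hi) as [d Hd]. eauto. }
  set (covered := fun x => exists l : list I,
         forall y, a <= y <= x -> exists i, In i l /\ U i (f y)).
  set (E := fun x => a <= x <= b /\ covered x).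
  assert (Ea : E a).
  { split; [lra |]. destruct (Hloc a) as [d [i [Hd Hi]]]; [lra |].
    exists (i :: nil). intros y Hy. exists i. split; [now left |].
    apply Hi; [lra |]. replace (y - a) with 0 by lra. rewrite Rabs_R0. exact Hd. }
  destruct (completeness E) as [m [Hub Hlub]].
  { exists b. intros x [Hx _]. lra. }
  { exists a. exact Ea. }
  assert (Ham : a <= m) by (apply Hub; exact Ea).
  assert (Hmb : m <= b) by (apply Hlub; intros x [Hx _]; lra).
  destruct (Hloc m) as [d [i [Hd Hi]]]; [lra |].
  assert (Hx : exists x, E x /\ m - d < x).
  { apply NNPP. intros Hn. assert (m <= m - d); [| lra].
    apply Hlub. intros x Ex. apply Rnot_lt_le. intros Hlt. apply Hn. eauto. }
  destruct Hx as [x [[Hxab [l Hl]] Hxd]].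
  assert (Hxm : x <= m) by (apply Hub; split; [exact Hxab | exists l; exact Hl]).
  set (z := Rmin b (m + d / 2)).
  assert (Hz : a <= z <= b) by (unfold z; split; [apply Rmin_glb | apply Rmin_l]; lra).
  assert (Hzd : z <= m + d / 2) by apply Rmin_r.
  assert (Hzb : z = b \/ z = m + d / 2) by (unfold z, Rmin; destruct Rle_dec; auto).
  clearbody z.
  assert (Cz : covered z).
  { exists (i :: l). intros y Hy. destruct (Rle_dec y x) as [Hyx | Hyx].
    - destruct (Hl y) as [j [Hj HUj]]; [lra |]. exists j. split; [now right | exact HUj].
    - exists i. split; [now left |]. apply Hi; [lra |]. split_Rabs; lra. }
  assert (z <= m) by (apply Hub; split; assumption).
  destruct Cz as [l' Hl']. replace z with b in Hl' by lra. exists l'.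
  intros p [y [Hy ->]]. apply Hl'. exact Hy.
Qed.

Lemma compact2_union (K1 K2 : pt -> Prop) : compact2 K1 -> compact2 K2 ->
  compact2 (fun p => K1 p \/ K2 p).
Proof.
  intros H1 H2 I U HU Hcov.
  destruct (H1 I U HU) as [l1 Hl1]; [intros p Hp; apply Hcov; now left |].
  destruct (H2 I U HU) as [l2 Hl2]; [intros p Hp; apply Hcov; now right |].
  exists (l1 ++ l2). intros p [Hp | Hp].
  - destruct (Hl1 p Hp) as [i [Hi HUi]]. exists i. split; [apply in_or_app; now left | exact HUi].
  - destruct (Hl2 p Hp) as [i [Hi HUi]]. exists i. split; [apply in_or_app; now right | exact HUi].
Qed.

Lemma compact2_ext (K1 K2 : pt -> Prop) : (forall p, K1 p <-> K2 p) ->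
  compact2 K1 -> compact2 K2.
Proof.
  intros HK H I U HU Hcov. destruct (H I U HU) as [l Hl].
  - intros p Hp. apply Hcov, HK, Hp.
  - exists l. intros p Hp. apply Hl, HK, Hp.
Qed.

Lemma cont_on_lipschitz (f : R -> pt) (a b L : R) : 0 < L ->
  (forall x y, a <= x <= b -> a <= y <= b -> dist2 (f x) (f y) <= L * Rabs (x - y)) ->
  cont_on f a b.
Proof.
  intros HL Hf t Ht eps Heps. exists (eps / L). split; [apply Rdiv_lt_0_compat; lra |].
  intros s Hs Hst. eapply Rle_lt_trans; [apply Hf; assumption |].
  apply (Rmult_lt_compat_l L) in Hst; [| exact HL].
  replace (L * (eps / L)) with eps in Hst by (field; lra). exact Hst.
Qed.

Lemma dist2_graph_P sg x y : (sg = 1 \/ sg = -1) -> -1/2 <= x <= 1/2 -> -1/2 <= y <= 1/2 ->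
  dist2 (x, sg * P x) (y, sg * P y) <= 2 * Rabs (x - y).
Proof.
  intros Hsg Hx Hy. eapply Rle_trans; [apply dist2_le_Rabs |]. cbn [fst snd].
  rewrite <- Rmult_minus_distr_l, Rabs_mult.
  replace (Rabs sg) with 1 by (destruct Hsg as [-> | ->]; split_Rabs; lra).
  pose proof (P_lipschitz x y Hx Hy). lra.
Qed.

Lemma graph_P_cont_on (sg : R) : (sg = 1 \/ sg = -1) ->
  cont_on (fun x => (x, sg * P x)) (-1/2) (1/2).
Proof.
  intros Hsg. apply (cont_on_lipschitz _ _ _ 2); [lra |].
  intros x y Hx Hy. apply dist2_graph_P; assumption.
Qed.

Lemma compact_Lambda2 : compact2 Lambda2.
Proof.
  apply (compact2_ext (fun p =>
      (exists x, -1/2 <= x <= 1/2 /\ p = (x, 1 * P x)) \/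
      (exists x, -1/2 <= x <= 1/2 /\ p = (x, -1 * P x)))).
  - intros [x y]. unfold Lambda2. cbn [fst snd]. split.
    + intros [[x' [Hx E]] | [x' [Hx E]]]; injection E as -> ->;
        split; [exact Hx | left; ring | exact Hx | right; ring].
    + intros [Hx [-> | ->]]; [left | right]; exists x;
        split; [exact Hx | f_equal; ring | exact Hx | f_equal; ring].
  - apply compact2_union; apply compact2_interval_image; try lra; apply graph_P_cont_on; auto.
Qed.

(** * Solutions of [Z2] through [Lambda2] *)

Definition clamp (a b s : R) : R := Rmax a (Rmin b s).

Lemma clamp_in a b s : a <= b -> a <= clamp a b s <= b.
Proof. unfold clamp, Rmax, Rmin. intros. repeat destruct Rle_dec; lra. Qed.

Lemma clamp_id a b s : a <= s <= b -> clamp a b s = s.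
Proof. unfold clamp, Rmax, Rmin. intros. repeat destruct Rle_dec; lra. Qed.

Lemma Rabs_clamp_le a b s x : a <= b -> Rabs (clamp a b s - clamp a b x) <= Rabs (s - x).
Proof. unfold clamp, Rmax, Rmin. intros. repeat destruct Rle_dec; split_Rabs; lra. Qed.

Lemma continuity_pt_clamp a b x : a <= b -> continuity_pt (clamp a b) x.
Proof.
  intros Hab. apply continuity_pt_locally. intros eps. exists eps. intros y Hy.
  eapply Rle_lt_trans; [apply Rabs_clamp_le |]; assumption.
Qed.

(* Clamping turns continuity on [a, b] into continuity on the whole line, as the
   mean value theorem requires. *)
Lemma continuity_pt_clamp_comp (g : pt -> R) (phi : R -> pt) a b x :
  (forall p q, Rabs (g p - g q) <= dist2 p q) -> a <= b -> cont_on phi a b ->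
  continuity_pt (fun s => g (phi (clamp a b s))) x.
Proof.
  intros Hg Hab Hphi. apply continuity_pt_locally. intros eps.
  destruct (Hphi (clamp a b x) (clamp_in a b x Hab) eps (cond_pos eps)) as [d [Hd Hclose]].
  exists (mkposreal d Hd). intros y Hy. eapply Rle_lt_trans; [apply Hg |].
  apply Hclose; [apply clamp_in; exact Hab |].
  eapply Rle_lt_trans; [apply Rabs_clamp_le; exact Hab | exact Hy].
Qed.

Lemma locally_open_interval a b t : a < t < b -> locally t (fun s => a < s < b).
Proof.
  intros Ht. assert (Hd : 0 < Rmin (t - a) (b - t)) by (apply Rmin_glb_lt; lra).
  exists (mkposreal _ Hd). intros y Hy. change (Rabs (y - t) < Rmin (t - a) (b - t)) in Hy.
  pose proof (Rmin_l (t - a) (b - t)). pose proof (Rmin_r (t - a) (b - t)).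
  split_Rabs; lra.
Qed.

Lemma is_derive_Rminus (f g : R -> R) x df dg : is_derive f x df -> is_derive g x dg ->
  is_derive (fun s => f s - g s) x (df - dg).
Proof. apply @is_derive_minus. Qed.

Lemma continuity_pt_of_is_derive (f : R -> R) x df : is_derive f x df -> continuity_pt f x.
Proof.
  intros H. apply continuity_pt_filterlim. apply (ex_derive_continuous f x). exists df. exact H.
Qed.

Lemma eq_of_derive_0 (h : R -> R) a b : a <= b -> (forall x, continuity_pt h x) ->
  (forall t, a < t < b -> is_derive h t 0) -> forall t, a <= t <= b -> h t = h a.
Proof.
  intros Hab Hc Hd t Ht. destruct (Req_dec t a) as [-> | Hne]; [reflexivity |].
  destruct (MVT_gen h a t (fun _ => 0)) as [c [_ Hcc]].
  - intros x Hx. rewrite Rmin_left in Hx by lra. rewrite Rmax_right in Hx by lra.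
    apply Hd. lra.
  - intros x _. apply Hc.
  - lra.
Qed.

Lemma cont_on_first_integral (g : pt -> R) (k : R -> R) (phi : R -> pt) (a b : R) :
  (forall p q, Rabs (g p - g q) <= dist2 p q) -> (forall x, continuity_pt k x) ->
  a <= b -> cont_on phi a b ->
  (forall t, a < t < b -> is_derive (fun s => g (phi s) - k s) t 0) ->
  forall t, a <= t <= b -> g (phi t) - k t = g (phi a) - k a.
Proof.
  intros Hg Hk Hab Hc Hd t Ht.
  set (h := fun s => g (phi (clamp a b s)) - k (clamp a b s)).
  assert (Hh : h t = h a).
  { apply eq_of_derive_0 with (b := b); [exact Hab | | | exact Ht].
    - intros x. apply continuity_pt_minus.
      + apply continuity_pt_clamp_comp; assumption.
      + apply continuity_pt_comp; [apply continuity_pt_clamp, Hab | apply Hk].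
    - intros s Hs. apply (is_derive_ext_loc (fun s => g (phi s) - k s)); [| apply Hd, Hs].
      apply (filter_imp (fun s => a < s < b)); [| apply locally_open_interval, Hs].
      intros u Hu. unfold h. rewrite clamp_id; [reflexivity | lra]. }
  unfold h in Hh. rewrite !clamp_id in Hh by lra. exact Hh.
Qed.

(* A field (sg, F'(x)) with sg = ±1 moves x at speed sg and keeps y - sg F(x) constant,
   since d/dt (y - sg F(x)) = (1 - sg^2) F'(x). *)
Lemma solves_graph (W : vf) (sg : R) (F dF : R -> R) (phi : R -> pt) (a b : R) :
  sg * sg = 1 -> (forall x, is_derive F x (dF x)) -> (forall p, W p = (sg, dF (fst p))) ->
  a <= b -> solves W phi a b -> forall t, a <= t <= b ->
  fst (phi t) = fst (phi a) + sg * (t - a) /\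
  snd (phi t) - sg * F (fst (phi t)) = snd (phi a) - sg * F (fst (phi a)).
Proof.
  intros Hsg HF HW Hab [Hc Hd].
  set (x0 := fst (phi a)).
  assert (Hx : forall t, a <= t <= b -> fst (phi t) = x0 + sg * (t - a)).
  { intros t Ht.
    pose proof (cont_on_first_integral fst (fun s => sg * s) phi a b Rabs_fst_le_dist2
                  ltac:(intros; reg) Hab Hc) as K.
    enough (fst (phi t) - sg * t = fst (phi a) - sg * a) by (unfold x0; lra).
    apply K; [| exact Ht]. intros s Hs.
    replace 0 with (sg - sg * 1) by ring. apply is_derive_Rminus.
    - pose proof (proj1 (Hd s Hs)) as E. rewrite HW in E. exact E.
    - auto_derive; [easy | ring]. }
  assert (Hk : forall x, continuity_pt (fun s => sg * F (x0 + sg * (s - a))) x).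
  { intros x. apply continuity_pt_scal.
    apply (continuity_pt_comp (fun u => x0 + sg * (u - a)) F); [reg |].
    apply (continuity_pt_of_is_derive _ _ _ (HF _)). }
  intros t Ht. split; [apply Hx, Ht |].
  pose proof (cont_on_first_integral snd _ phi a b Rabs_snd_le_dist2 Hk Hab Hc) as K.
  rewrite (Hx t Ht). replace x0 with (x0 + sg * (a - a)) at 2 by ring.
  apply K; [| exact Ht]. intros s Hs. set (y := x0 + sg * (s - a)).
  replace 0 with (dF y - sg * (sg * dF y)) by (rewrite <- Rmult_assoc, Hsg; ring).
  apply is_derive_Rminus.
  - pose proof (proj2 (Hd s Hs)) as E. rewrite HW, Hx in E by lra. exact E.
  - apply is_derive_scal.
    apply (is_derive_comp F (fun s => x0 + sg * (s - a))); [apply HF |].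
    auto_derive; [easy | ring].
Qed.

Lemma Lambda2_upper p : Lambda2 p -> 0 <= snd p -> snd p = P (fst p).
Proof. intros [Hx [E | E]] Hy; [exact E |]. apply P_ge0_iff in Hx. lra. Qed.

Lemma Lambda2_lower p : Lambda2 p -> snd p <= 0 -> snd p = - P (fst p).
Proof. intros [Hx [E | E]] Hy; [| exact E]. apply P_ge0_iff in Hx. lra. Qed.

Lemma Lambda2_origin : Lambda2 origin.
Proof. split; [simpl; lra | left; simpl; rewrite P_0; reflexivity]. Qed.

Lemma piece_KT_empty phi a b : a <= b -> ~ piece X2 Y2 KT phi a b.
Proof.
  intros Hab [_ H].
  destruct (H a (conj (Rle_refl a) Hab) 1 Rlt_0_1) as [q [[[_ [H1 H2]] | [_ [H1 H2]]] _]];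
    unfold Wf, X2, Y2 in *; simpl in *; lra.
Qed.

Lemma graph_piece_Lambda2 (W : vf) (sg : R) phi a b t0 :
  (sg = 1 \/ sg = -1) -> (forall p, W p = (sg, dP (fst p))) -> a <= b -> solves W phi a b ->
  (forall t, a <= t <= b -> 0 <= sg * snd (phi t)) -> a <= t0 <= b -> Lambda2 (phi t0) ->
  forall t, a <= t <= b -> Lambda2 (phi t) /\
    fst (phi t) = fst (phi t0) + sg * (t - t0) /\ snd (phi t) = sg * P (fst (phi t)).
Proof.
  intros Hsg HW Hab Hs Hsign Ht0 HL0 t Ht.
  assert (Hsg2 : sg * sg = 1) by (destruct Hsg as [-> | ->]; ring).
  destruct (solves_graph W sg P dP phi a b Hsg2 is_derive_P HW Hab Hs t Ht) as [Hx Hy].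
  destruct (solves_graph W sg P dP phi a b Hsg2 is_derive_P HW Hab Hs t0 Ht0) as [Hx0 Hy0].
  assert (E0 : snd (phi t0) = sg * P (fst (phi t0))).
  { pose proof (Hsign t0 Ht0).
    destruct Hsg as [-> | ->];
      [rewrite (Lambda2_upper _ HL0) by lra | rewrite (Lambda2_lower _ HL0) by lra]; ring. }
  assert (Ey : snd (phi t) = sg * P (fst (phi t))) by lra.
  assert (HP : 0 <= P (fst (phi t))).
  { pose proof (Hsign t Ht) as H. rewrite Ey, <- Rmult_assoc, Hsg2, Rmult_1_l in H. exact H. }
  split; [| split; [lra | exact Ey]].
  split; [apply P_ge0_iff, HP |]. destruct Hsg as [-> | ->]; [left | right]; lra.
Qed.

Lemma piece_along_Lambda2 k phi a b t0 : a <= b -> piece X2 Y2 k phi a b ->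
  a <= t0 <= b -> Lambda2 (phi t0) ->
  exists sg, (sg = 1 \/ sg = -1) /\ forall t, a <= t <= b -> Lambda2 (phi t) /\
    fst (phi t) = fst (phi t0) + sg * (t - t0) /\ snd (phi t) = sg * P (fst (phi t)).
Proof.
  intros Hab Hp Ht0 HL0. destruct k; destruct Hp as [Hs Hy].
  - exists 1. split; [now left |].
    apply (graph_piece_Lambda2 X2); auto. intros t Ht. rewrite Rmult_1_l. auto.
  - exists (-1). split; [now right |].
    apply (graph_piece_Lambda2 Y2); auto. intros t Ht. pose proof (Hy t Ht). lra.
  - exfalso. apply (piece_KT_empty phi a b); [exact Hab | split; assumption].
Qed.

Lemma Lambda2_not_singular p : Lambda2 p -> ~ singular_tang X2 Y2 p.
Proof.
  intros HL [[Hs [Hw HX]] _]. unfold onSigma in Hs.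
  assert (HP : P (fst p) = 0) by (destruct HL as [_ [E | E]]; lra).
  destruct p as [x y]. cbn [fst snd] in *. subst y.
  unfold Wf, X2 in Hw. cbn [fst snd] in Hw.
  destruct (P_eq0 _ HP) as [-> | [-> | ->]]; [| field_simplify in Hw; lra ..].
  unfold W2f, Wf, X2 in HX. cbn [fst snd] in HX.
  rewrite Derive_const in HX.
  replace (Derive (fun s => s / 2 - 4 * s ^ 3) 0) with (1 / 2) in HX; [lra |].
  symmetry. apply is_derive_unique. auto_derive; [easy | field].
Qed.

Lemma glue_at_0 (Rel : R -> R -> Prop) (a b : R) :
  (forall u w, (u <= 0 <= w \/ w <= 0 <= u) -> Rel u 0 -> Rel 0 w -> Rel u w) ->
  (forall u v, a <= u <= 0 -> a <= v <= 0 -> Rel u v) ->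
  (forall u v, 0 <= u <= b -> 0 <= v <= b -> Rel u v) ->
  forall u v, a <= u <= b -> a <= v <= b -> Rel u v.
Proof.
  intros Htrans Hl Hr u v Hu Hv.
  destruct (Rle_dec u 0), (Rle_dec v 0).
  - apply Hl; lra.
  - apply Htrans; [left; lra | apply Hl | apply Hr]; lra.
  - apply Htrans; [right; lra | apply Hr | apply Hl]; lra.
  - apply Hr; lra.
Qed.

Lemma local_traj_pieces phi p a b t0 : local_traj X2 Y2 phi p a b ->
  a <= t0 <= b -> Lambda2 (phi t0) ->
  a <= 0 <= b /\ exists k1 k2, piece X2 Y2 k1 phi a 0 /\ piece X2 Y2 k2 phi 0 b.
Proof.
  intros [Hab [H0 [[Hsing Hconst] | [_ Hpieces]]]] Ht0 HL.
  - exfalso. apply (Lambda2_not_singular p); [| exact Hsing].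
    rewrite <- (Hconst t0 Ht0). exact HL.
  - split; [exact Hab |]. destruct Hpieces as [k1 [k2 [Hp1 [Hp2 _]]]]. eauto.
Qed.

(** * The phase and the invariance of [Lambda2] *)

Definition has_phase (p : pt) (s : R) : Prop :=
  Lambda2 p /\
  ((snd p = P (fst p) /\ exists k : Z, s = fst p + IZR k) \/
   (snd p = - P (fst p) /\ exists k : Z, s = - fst p + IZR k)).

Lemma has_phase_Lambda2 p s : has_phase p s -> Lambda2 p.
Proof. intros [H _]. exact H. Qed.

Lemma has_phase_eq p s s' : s = s' -> has_phase p s -> has_phase p s'.
Proof. intros ->. auto. Qed.

Lemma Lambda2_has_phase p : Lambda2 p -> exists s, has_phase p s.
Proof.
  intros HL. pose proof HL as [_ [E | E]].
  - exists (fst p). split; [exact HL |]. left. split; [exact E |]. exists 0%Z. simpl. ring.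
  - exists (- fst p). split; [exact HL |]. right. split; [exact E |]. exists 0%Z. simpl. ring.
Qed.

Lemma has_phase_origin : has_phase origin 0.
Proof.
  split; [exact Lambda2_origin |]. left. simpl. rewrite P_0.
  split; [reflexivity | exists 0%Z; simpl; ring].
Qed.

(* The arcs meet where [P] vanishes, at [x = 0, 1/2, -1/2], and there [x] and [-x]
   agree modulo 1. *)
Lemma P_eq0_shift x : P x = 0 -> exists m : Z, - x = x + IZR m.
Proof.
  intros H. destruct (P_eq0 _ H) as [-> | [-> | ->]].
  - exists 0%Z. simpl. ring.
  - exists (-1)%Z. simpl. lra.
  - exists 1%Z. simpl. lra.
Qed.

Lemma phase_upper p s : has_phase p s -> snd p = P (fst p) -> exists k : Z, s = fst p + IZR k.
Proof.
  intros [_ [[_ Hk] | [Hy [k Hk]]]] Hu; [exact Hk |].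
  destruct (P_eq0_shift (fst p)) as [m Hm]; [lra |].
  exists (k + m)%Z. rewrite plus_IZR. lra.
Qed.

Lemma phase_lower p s : has_phase p s -> snd p = - P (fst p) -> exists k : Z, s = - fst p + IZR k.
Proof.
  intros [_ [[Hy [k Hk]] | [_ Hk]]] Hl; [| exact Hk].
  destruct (P_eq0_shift (fst p)) as [m Hm]; [lra |].
  exists (k - m)%Z. rewrite minus_IZR. lra.
Qed.

Lemma piece_phase k phi a b : a <= b -> piece X2 Y2 k phi a b ->
  forall t0 t, a <= t0 <= b -> a <= t <= b ->
  forall s, has_phase (phi t0) s -> has_phase (phi t) (s + (t - t0)).
Proof.
  intros Hab Hp t0 t Ht0 Ht s Hs.
  destruct (piece_along_Lambda2 k phi a b t0 Hab Hp Ht0 (has_phase_Lambda2 _ _ Hs))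
    as [sg [Hsg Harc]].
  destruct (Harc t Ht) as [HL [Hx Hy]]. destruct (Harc t0 Ht0) as [_ [_ Hy0]].
  split; [exact HL |]. destruct Hsg as [-> | ->].
  - destruct (phase_upper _ _ Hs) as [k0 Hk0]; [lra |].
    left. split; [lra |]. exists k0. lra.
  - destruct (phase_lower _ _ Hs) as [k0 Hk0]; [lra |].
    right. split; [lra |]. exists k0. lra.
Qed.

Lemma local_phase phi p a b : local_traj X2 Y2 phi p a b ->
  forall t0 t, a <= t0 <= b -> a <= t <= b ->
  forall s, has_phase (phi t0) s -> has_phase (phi t) (s + (t - t0)).
Proof.
  intros Hloc t0 t Ht0 Ht s Hs.
  destruct (local_traj_pieces phi p a b t0 Hloc Ht0 (has_phase_Lambda2 _ _ Hs))
    as [Hab [k1 [k2 [Hp1 Hp2]]]].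
  revert s Hs. apply (glue_at_0 (fun u v => forall s, has_phase (phi u) s ->
                                  has_phase (phi v) (s + (v - u))) a b); try assumption.
  - intros u w _ Hu0 H0w s Hs. apply (has_phase_eq _ (s + (0 - u) + (w - 0))); [ring |].
    apply H0w, Hu0, Hs.
  - intros u v Hu Hv. exact (piece_phase k1 phi a 0 ltac:(lra) Hp1 u v Hu Hv).
  - intros u v Hu Hv. exact (piece_phase k2 phi 0 b ltac:(lra) Hp2 u v Hu Hv).
Qed.

Section Partition.
Variable t : Z -> R.
Hypothesis t_incr : forall i, t i < t (i + 1)%Z.
Hypothesis t_unbounded_above : forall M, exists i, M < t i.
Hypothesis t_unbounded_below : forall M, exists i, t i < M.

Lemma partition_mono i j : (i <= j)%Z -> t i <= t j.
Proof.
  intros Hij. replace j with (i + Z.of_nat (Z.to_nat (j - i)))%Z by lia.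
  induction (Z.to_nat (j - i)) as [| n IH]; [rewrite Z.add_0_r; lra |].
  rewrite Nat2Z.inj_succ, Z.add_succ_r, <- Z.add_1_r. pose proof (t_incr (i + Z.of_nat n)). lra.
Qed.

Lemma partition_locate s : exists i, t i <= s <= t (i + 1)%Z.
Proof.
  destruct (t_unbounded_below s) as [i1 H1]. destruct (t_unbounded_above s) as [i2 H2].
  assert (Hi : (i1 < i2)%Z).
  { apply Z.nle_gt. intros Hle. pose proof (partition_mono i2 i1 Hle). lra. }
  assert (Hn : forall n i, t i < s -> s < t (i + Z.of_nat n)%Z ->
                 exists j, t j <= s <= t (j + 1)%Z).
  { induction n as [| n IH]; intros i Hi1 Hi2.
    - rewrite Z.add_0_r in Hi2. lra.
    - destruct (Rle_dec s (t (i + 1)%Z)); [exists i; lra |].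
      apply (IH (i + 1)%Z); [lra |].
      replace (i + 1 + Z.of_nat n)%Z with (i + Z.of_nat (S n))%Z by lia. exact Hi2. }
  apply (Hn (Z.to_nat (i2 - i1)) i1 H1).
  replace (i1 + Z.of_nat (Z.to_nat (i2 - i1)))%Z with i2 by lia. exact H2.
Qed.

Section Propagate.
Variables (G : R -> Prop) (u v : R).
Hypothesis G_step : forall i a b, t i <= a <= t (i + 1)%Z -> t i <= b <= t (i + 1)%Z ->
  u <= a <= v -> u <= b <= v -> G a -> G b.

Lemma partition_propagate_right : G u -> forall w, u <= w <= v -> G w.
Proof.
  intros Gu. destruct (partition_locate u) as [i Hi].
  assert (Hn : forall n w, u <= w <= v -> w <= t (i + 1 + Z.of_nat n)%Z -> G w).
  { induction n as [| n IH]; intros w Hw Hwt.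
    - rewrite Z.add_0_r in Hwt. apply (G_step i u w); lra || assumption.
    - remember (i + 1 + Z.of_nat n)%Z as k eqn:Hk.
      destruct (Rle_dec w (t k)) as [Hwk | Hwk]; [apply IH; assumption |].
      assert (Hu : u <= t k) by (pose proof (partition_mono (i + 1) k ltac:(lia)); lra).
      apply (G_step k (t k) w).
      + pose proof (t_incr k). lra.
      + replace (k + 1)%Z with (i + 1 + Z.of_nat (S n))%Z by lia. lra.
      + lra.
      + lra.
      + apply IH; lra. }
  intros w Hw. destruct (t_unbounded_above w) as [j Hj].
  apply (Hn (Z.to_nat (j - (i + 1))) w Hw).
  pose proof (partition_mono j (i + 1 + Z.of_nat (Z.to_nat (j - (i + 1))))%Z ltac:(lia)). lra.
Qed.

End Propagate.

(* Backward propagation is forward propagation of [~ G]. *)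
Lemma partition_propagate (G : R -> Prop) u v :
  (forall i a b, t i <= a <= t (i + 1)%Z -> t i <= b <= t (i + 1)%Z ->
     u <= a <= v -> u <= b <= v -> G a -> G b) ->
  forall w0, u <= w0 <= v -> G w0 -> forall w, u <= w <= v -> G w.
Proof.
  intros Hstep w0 Hw0 G0 w Hw. destruct (Rle_dec w0 w).
  - apply (partition_propagate_right G w0 v); [| exact G0 | lra].
    intros i a b Ha Hb Ha' Hb'. apply (Hstep i a b); lra || assumption.
  - apply NNPP. intros Hn.
    apply (partition_propagate_right (fun x => ~ G x) w w0) with (w := w0);
      [| exact Hn | lra | exact G0].
    intros i a b Ha Hb Ha' Hb' Ga Gb. apply Ga, (Hstep i b a); lra || assumption.
Qed.

End Partition.

Lemma global_traj_propagate gamma (G : R -> Prop) u v : global_traj X2 Y2 gamma ->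
  (forall phi p a b tau, local_traj X2 Y2 phi p a b ->
     (forall s, a <= s <= b -> phi s = gamma (s + tau)) ->
     forall x y, a <= x - tau <= b -> a <= y - tau <= b -> u <= x <= v -> u <= y <= v ->
     G x -> G y) ->
  forall w0, u <= w0 <= v -> G w0 -> forall w, u <= w <= v -> G w.
Proof.
  intros [t [sigma [Hinc [Hup [Hdown [Hloc [_ Heq]]]]]]] Hstep.
  apply (partition_propagate t Hinc Hup Hdown). intros i a b Ha Hb Hau Hbu Ga.
  destruct (Hloc i) as [tau [Htau HL]].
  apply (Hstep _ _ _ _ tau HL) with (x := a); [| lra .. | exact Ga].
  intros s Hs. symmetry. apply Heq. lra.
Qed.

Lemma global_phase gamma : global_traj X2 Y2 gamma ->
  forall t0 s, has_phase (gamma t0) s -> forall t, has_phase (gamma t) (s + (t - t0)).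
Proof.
  intros Hg t0 s Hs t.
  apply (global_traj_propagate gamma (fun w => has_phase (gamma w) (s + (w - t0)))
           (Rmin t0 t) (Rmax t0 t) Hg) with (w0 := t0).
  - intros phi p a b tau HL Hphi x y Hx Hy _ _ Gx.
    pose proof (local_phase phi p a b HL (x - tau) (y - tau) Hx Hy) as K.
    rewrite !Hphi in K by assumption. replace (x - tau + tau) with x in K by ring.
    replace (y - tau + tau) with y in K by ring.
    apply (has_phase_eq _ (s + (x - t0) + (y - tau - (x - tau)))); [ring | auto].
  - split; [apply Rmin_l | apply Rmax_l].
  - apply (has_phase_eq _ s); [ring | exact Hs].
  - split; [apply Rmin_r | apply Rmax_r].
Qed.

Lemma Lambda2_invariant : invariant X2 Y2 Lambda2.
Proof.
  intros gamma Hg H0 t. destruct (Lambda2_has_phase _ H0) as [s Hs].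
  exact (has_phase_Lambda2 _ _ (global_phase gamma Hg 0 s Hs t)).
Qed.

(** * Itineraries *)

(* [loop_pt true] runs once around the right loop ([x >= 0]) and [loop_pt false] around
   the left one, both from the origin at [u = 0] back to it at [u = 1], at the speed of [Z2]. *)
Definition loop_pt (b : bool) (u : R) : pt :=
  if b then (if Rle_dec u (1/2) then (u, P u) else (1 - u, - P (1 - u)))
  else (if Rle_dec u (1/2) then (- u, - P u) else (u - 1, P (u - 1))).

Lemma loop_pt_true_first u : u <= 1/2 -> loop_pt true u = (u, P u).
Proof. intros H. unfold loop_pt. destruct Rle_dec; [reflexivity | lra]. Qed.

Lemma loop_pt_false_first u : u <= 1/2 -> loop_pt false u = (- u, - P u).
Proof. intros H. unfold loop_pt. destruct Rle_dec; [reflexivity | lra]. Qed.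

Lemma loop_pt_true_second u : 1/2 <= u -> loop_pt true u = (1 - u, - P (1 - u)).
Proof.
  intros H. unfold loop_pt. destruct Rle_dec; [| reflexivity].
  replace u with (1/2) by lra. replace (1 - 1/2) with (1/2) by field. rewrite P_half.
  f_equal. ring.
Qed.

Lemma loop_pt_false_second u : 1/2 <= u -> loop_pt false u = (u - 1, P (u - 1)).
Proof.
  intros H. unfold loop_pt. destruct Rle_dec; [| reflexivity].
  replace u with (1/2) by lra. replace (1/2 - 1) with (- (1/2)) by field.
  rewrite P_opp, P_half. f_equal; field.
Qed.

Lemma loop_pt_0 b : loop_pt b 0 = origin.
Proof.
  destruct b; [rewrite loop_pt_true_first | rewrite loop_pt_false_first]; try lra;
    rewrite P_0; unfold origin; f_equal; ring.
Qed.

Lemma loop_pt_1 b : loop_pt b 1 = origin.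
Proof.
  destruct b; [rewrite loop_pt_true_second | rewrite loop_pt_false_second]; try lra;
    replace (1 - 1) with 0 by ring; rewrite P_0; unfold origin; f_equal; ring.
Qed.

Lemma loop_pt_true_pos u : 0 < u < 1 -> 0 < fst (loop_pt true u).
Proof.
  intros H. destruct (Rle_dec u (1/2));
    [rewrite loop_pt_true_first | rewrite loop_pt_true_second]; simpl; lra.
Qed.

Lemma loop_pt_false_neg u : 0 < u < 1 -> fst (loop_pt false u) < 0.
Proof.
  intros H. destruct (Rle_dec u (1/2));
    [rewrite loop_pt_false_first | rewrite loop_pt_false_second]; simpl; lra.
Qed.

Lemma has_phase_loop_pt p (j : Z) u : 0 <= u <= 1 -> has_phase p (IZR j + u) ->
  p = loop_pt true u \/ p = loop_pt false u.
Proof.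
  intros Hu [[Hx _] [[Hy [k Hk]] | [Hy [k Hk]]]]; destruct p as [x y]; cbn [fst snd] in *; subst y.
  - assert (Hjk : (j - k = 0 \/ j - k = -1)%Z).
    { assert (-2 < j - k < 1)%Z by (split; apply lt_IZR; rewrite minus_IZR; simpl; lra). lia. }
    destruct Hjk as [E | E]; apply (f_equal IZR) in E; rewrite minus_IZR in E; simpl in E.
    + left. rewrite loop_pt_true_first by lra. replace x with u by lra. reflexivity.
    + right. rewrite loop_pt_false_second by lra. replace x with (u - 1) by lra. reflexivity.
  - assert (Hjk : (k - j = 0 \/ k - j = 1)%Z).
    { assert (-1 < k - j < 2)%Z by (split; apply lt_IZR; rewrite minus_IZR; simpl; lra). lia. }
    destruct Hjk as [E | E]; apply (f_equal IZR) in E; rewrite minus_IZR in E; simpl in E.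
    + right. rewrite loop_pt_false_first by lra. replace x with (- u) by lra.
      rewrite P_opp. reflexivity.
    + left. rewrite loop_pt_true_second by lra. replace x with (1 - u) by lra. reflexivity.
Qed.

Lemma piece_sign k phi a b c (j : Z) : a <= b -> piece X2 Y2 k phi a b ->
  (forall u, a <= u <= b -> has_phase (phi u) (u + c)) ->
  forall u1 u2, a <= u1 <= b -> a <= u2 <= b ->
  IZR j < u1 + c < IZR j + 1 -> IZR j < u2 + c < IZR j + 1 ->
  0 < fst (phi u1) -> 0 < fst (phi u2).
Proof.
  intros Hab Hp Hphase u1 u2 Hu1 Hu2 Hj1 Hj2 Hpos.
  destruct (piece_along_Lambda2 k phi a b u1 Hab Hp Hu1 (has_phase_Lambda2 _ _ (Hphase u1 Hu1)))
    as [sg [Hsg Harc]].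
  destruct (Harc u1 Hu1) as [[Hx1 _] [_ Hy1]]. destruct (Harc u2 Hu2) as [_ [Hx2 _]].
  destruct Hsg as [-> | ->].
  - destruct (phase_upper _ _ (Hphase u1 Hu1)) as [K HK]; [lra |].
    assert (IZR K <= IZR j) by (apply IZR_le, Z.lt_succ_r, lt_IZR; rewrite succ_IZR; lra).
    lra.
  - destruct (phase_lower _ _ (Hphase u1 Hu1)) as [K HK]; [lra |].
    assert (IZR j + 1 <= IZR K) by (rewrite <- succ_IZR; apply IZR_le, Zlt_le_succ, lt_IZR; lra).
    lra.
Qed.

Lemma local_sign phi p a b c (j : Z) : local_traj X2 Y2 phi p a b ->
  (forall u, a <= u <= b -> has_phase (phi u) (u + c)) ->
  forall u1 u2, a <= u1 <= b -> a <= u2 <= b ->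
  IZR j < u1 + c < IZR j + 1 -> IZR j < u2 + c < IZR j + 1 ->
  0 < fst (phi u1) -> 0 < fst (phi u2).
Proof.
  intros Hloc Hphase u1 u2 Hu1.
  destruct (local_traj_pieces phi p a b u1 Hloc Hu1 (has_phase_Lambda2 _ _ (Hphase u1 Hu1)))
    as [Hab [k1 [k2 [Hp1 Hp2]]]].
  revert u1 u2 Hu1.
  apply (glue_at_0 (fun u v => IZR j < u + c < IZR j + 1 -> IZR j < v + c < IZR j + 1 ->
                               0 < fst (phi u) -> 0 < fst (phi v)) a b).
  - intros u w Hord Hu0 H0w Hju Hjw Hpos.
    assert (Hj0 : IZR j < 0 + c < IZR j + 1) by (destruct Hord; lra).
    exact (H0w Hj0 Hjw (Hu0 Hju Hj0 Hpos)).
  - apply (piece_sign k1 phi a 0 c j ltac:(lra) Hp1). intros u Hu. apply Hphase. lra.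
  - apply (piece_sign k2 phi 0 b c j ltac:(lra) Hp2). intros u Hu. apply Hphase. lra.
Qed.

Lemma global_sign gamma : global_traj X2 Y2 gamma -> (forall w, has_phase (gamma w) w) ->
  forall (j : Z) w1 w2, IZR j < w1 < IZR j + 1 -> IZR j < w2 < IZR j + 1 ->
  0 < fst (gamma w1) -> 0 < fst (gamma w2).
Proof.
  intros Hg Hphase j w1 w2 Hw1 Hw2 Hpos.
  apply (global_traj_propagate gamma (fun w => 0 < fst (gamma w)) (Rmin w1 w2) (Rmax w1 w2) Hg)
    with (w0 := w1).
  - intros phi p a b tau HL Hphi x y Hx Hy Hxu Hyu.
    assert (Hmin : IZR j < Rmin w1 w2) by (apply Rmin_glb_lt; lra).
    assert (Hmax : Rmax w1 w2 < IZR j + 1) by (apply Rmax_lub_lt; lra).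
    assert (Hph : forall u, a <= u <= b -> has_phase (phi u) (u + tau))
      by (intros u Hu; rewrite Hphi by exact Hu; apply Hphase).
    pose proof (local_sign phi p a b tau j HL Hph (x - tau) (y - tau) Hx Hy
                  ltac:(lra) ltac:(lra)) as K.
    rewrite !Hphi in K by assumption. replace (x - tau + tau) with x in K by ring.
    replace (y - tau + tau) with y in K by ring. exact K.
  - split; [apply Rmin_l | apply Rmax_l].
  - exact Hpos.
  - split; [apply Rmin_r | apply Rmax_r].
Qed.

Lemma origin_at_integer_phases gamma : (forall w, has_phase (gamma w) w) ->
  forall j : Z, gamma (IZR j) = origin.
Proof.
  intros Hphase j. destruct (has_phase_loop_pt (gamma (IZR j)) j 0) as [E | E];
    [lra | rewrite Rplus_0_r; apply Hphase | ..]; rewrite E; apply loop_pt_0.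
Qed.

Lemma itin_true_iff gamma : (forall w, has_phase (gamma w) w) ->
  forall j, itin gamma j = true <-> 0 < fst (gamma (IZR j + 1/2)).
Proof.
  intros Hphase j. pose proof (origin_at_integer_phases gamma Hphase j) as Hj.
  unfold itin. destruct excluded_middle_informative as [Hi | Hi].
  - split; [intros _ | reflexivity]. destruct Hi as [[Hi _] | [Ho [Hi _]]]; [| lra].
    rewrite Hj in Hi. simpl in Hi. lra.
  - split; [discriminate | intros Hpos]. exfalso. apply Hi. right. split; [exact Hj |].
    destruct (has_phase_loop_pt _ j (1/2) ltac:(lra) (Hphase _)) as [E | E]; rewrite E in *.
    + rewrite loop_pt_true_first by lra. split; [simpl; lra | left; reflexivity].
    + rewrite loop_pt_false_first in Hpos by lra. simpl in Hpos. lra.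
Qed.

Lemma origin_traj_loops gamma : Omega2 gamma -> gamma 0 = origin ->
  forall (j : Z) u, 0 <= u <= 1 -> gamma (IZR j + u) = loop_pt (itin gamma j) u.
Proof.
  intros [Hg _] H0.
  assert (Hphase : forall w, has_phase (gamma w) w).
  { intros w. apply (has_phase_eq _ (0 + (w - 0))); [ring |].
    apply (global_phase gamma Hg). rewrite H0. exact has_phase_origin. }
  pose proof (origin_at_integer_phases gamma Hphase) as Hint.
  pose proof (itin_true_iff gamma Hphase) as Hitin.
  intros j u Hu.
  destruct (Req_dec u 0) as [-> | Hu0]; [rewrite Rplus_0_r, Hint, loop_pt_0; reflexivity |].
  destruct (Req_dec u 1) as [-> | Hu1].
  { rewrite <- plus_IZR, Hint, loop_pt_1. reflexivity. }
  assert (Hw : IZR j < IZR j + u < IZR j + 1) by lra.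
  assert (Hh : IZR j < IZR j + 1/2 < IZR j + 1) by lra.
  destruct (has_phase_loop_pt _ j u Hu (Hphase _)) as [E | E];
    destruct (itin gamma j) eqn:Hb; auto; exfalso.
  - assert (Hpos : 0 < fst (gamma (IZR j + u))) by (rewrite E; apply loop_pt_true_pos; lra).
    apply (global_sign gamma Hg Hphase j _ _ Hw Hh), Hitin in Hpos. congruence.
  - apply Hitin, (global_sign gamma Hg Hphase j _ _ Hh Hw) in Hb.
    rewrite E in Hb. pose proof (loop_pt_false_neg u ltac:(lra)). lra.
Qed.

Lemma graph_solves (W : vf) (sg c : R) (phi : R -> pt) (a b : R) :
  (sg = 1 \/ sg = -1) -> (forall p, W p = (sg, dP (fst p))) ->
  (forall s, a <= s <= b ->
     phi s = (c + sg * s, sg * P (c + sg * s)) /\ -1/2 <= c + sg * s <= 1/2) ->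
  solves W phi a b.
Proof.
  intros Hsg HW Hphi. split.
  - apply (cont_on_lipschitz _ _ _ 2); [lra |]. intros s t Hs Ht.
    destruct (Hphi s Hs) as [-> Hxs]. destruct (Hphi t Ht) as [-> Hxt].
    eapply Rle_trans; [apply dist2_graph_P; assumption |].
    replace (c + sg * s - (c + sg * t)) with (sg * (s - t)) by ring.
    rewrite Rabs_mult. replace (Rabs sg) with 1 by (destruct Hsg as [-> | ->]; split_Rabs; lra).
    lra.
  - intros t Ht. rewrite HW, (proj1 (Hphi t ltac:(lra))). cbn [fst snd].
    assert (Hloc : forall f : pt -> R,
               locally t (fun s => f (c + sg * s, sg * P (c + sg * s)) = f (phi s))).
    { intros f. apply (filter_imp (fun s => a < s < b)); [| apply locally_open_interval, Ht].
      intros s Hs. rewrite (proj1 (Hphi s ltac:(lra))). reflexivity. }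
    split.
    + apply (is_derive_ext_loc (fun s => c + sg * s)); [apply (Hloc fst) |].
      auto_derive; [easy | ring].
    + apply (is_derive_ext_loc (fun s => sg * P (c + sg * s))); [apply (Hloc snd) |].
      replace (dP (c + sg * t)) with (sg * (sg * dP (c + sg * t)))
        by (destruct Hsg as [-> | ->]; ring).
      apply is_derive_scal.
      apply (is_derive_comp P (fun s => c + sg * s)); [apply is_derive_P |].
      auto_derive; [easy | ring].
Qed.

(* Starting off [Sigma], at [(c, sg * P c)] with [P c > 0], no sliding or crossing
   condition is involved. *)
Lemma graph_local_traj (sg c : R) (phi : R -> pt) (a b : R) :
  a <= 0 <= b -> (sg = 1 \/ sg = -1) -> 0 < P c ->
  (forall s, a <= s <= b ->
     phi s = (c + sg * s, sg * P (c + sg * s)) /\ -1/2 <= c + sg * s <= 1/2) ->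
  local_traj X2 Y2 phi (phi 0) a b.
Proof.
  intros Hab Hsg Hc Hphi.
  assert (H0 : snd (phi 0) = sg * P c).
  { rewrite (proj1 (Hphi 0 Hab)). cbn [snd]. rewrite Rmult_0_r, Rplus_0_r. reflexivity. }
  assert (Hsign : forall s, a <= s <= b -> 0 <= sg * snd (phi s)).
  { intros s Hs. destruct (Hphi s Hs) as [-> Hx]. cbn [snd].
    rewrite <- Rmult_assoc. replace (sg * sg) with 1 by (destruct Hsg as [-> | ->]; ring).
    rewrite Rmult_1_l. apply P_ge0_iff, Hx. }
  assert (Hsub : forall a' b', a <= a' -> b' <= b -> forall s, a' <= s <= b' ->
     phi s = (c + sg * s, sg * P (c + sg * s)) /\ -1/2 <= c + sg * s <= 1/2)
    by (intros a' b' Ha' Hb' s Hs; apply Hphi; lra).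
  split; [exact Hab |]. split; [reflexivity |]. right. split.
  - intros [[Hs _] _]. unfold onSigma in Hs. rewrite H0 in Hs.
    destruct Hsg as [-> | ->]; lra.
  - destruct Hsg as [-> | ->].
    + exists KX, KX. split; [| split].
      * split; [apply (graph_solves X2 1 c); auto; apply Hsub; lra |].
        intros t Ht. pose proof (Hsign t ltac:(lra)). lra.
      * split; [apply (graph_solves X2 1 c); auto; apply Hsub; lra |].
        intros t Ht. pose proof (Hsign t ltac:(lra)). lra.
      * left. split; [lra | auto].
    + exists KY, KY. split; [| split].
      * split; [apply (graph_solves Y2 (-1) c); auto; apply Hsub; lra |].
        intros t Ht. pose proof (Hsign t ltac:(lra)). lra.
      * split; [apply (graph_solves Y2 (-1) c); auto; apply Hsub; lra |].
        intros t Ht. pose proof (Hsign t ltac:(lra)). lra.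
      * right. left. split; [lra | auto].
Qed.

Definition traj_of_seq (a : Z -> bool) (t : R) : pt :=
  loop_pt (a (Int_part t)) (t - IZR (Int_part t)).

Lemma Int_part_eq (j : Z) t : IZR j <= t < IZR j + 1 -> Int_part t = j.
Proof.
  intros H. destruct (base_Int_part t) as [H1 H2].
  assert (Int_part t < j + 1)%Z by (apply lt_IZR; rewrite plus_IZR; simpl; lra).
  assert (j < Int_part t + 1)%Z by (apply lt_IZR; rewrite plus_IZR; simpl; lra).
  lia.
Qed.

Lemma traj_of_seq_loop a (j : Z) u : 0 <= u <= 1 -> traj_of_seq a (IZR j + u) = loop_pt (a j) u.
Proof.
  intros Hu. unfold traj_of_seq. destruct (Req_dec u 1) as [-> | Hu1].
  - rewrite <- plus_IZR, (Int_part_eq (j + 1)) by lra.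
    rewrite Rminus_diag, loop_pt_0, loop_pt_1. reflexivity.
  - rewrite (Int_part_eq j) by lra. f_equal. ring.
Qed.

Lemma traj_of_seq_0 a : traj_of_seq a 0 = origin.
Proof.
  replace 0 with (IZR 0 + 0) by (simpl; ring).
  rewrite traj_of_seq_loop by lra. apply loop_pt_0.
Qed.

(* Centred at mid-cell, a half-unit time cell is based at [(c, sg * P c)] with
   [c = 1/4] or [c = -1/4], off [Sigma]. *)
Lemma traj_of_seq_half_cell a (i : Z) : exists sg c, (sg = 1 \/ sg = -1) /\ 0 < P c /\
  forall s, -1/4 <= s <= 1/4 ->
    traj_of_seq a (IZR i / 2 + 1/4 + s) = (c + sg * s, sg * P (c + sg * s)) /\
    -1/2 <= c + sg * s <= 1/2.
Proof.
  assert (Hq : 0 < P (1/4)) by exact P_quarter_pos.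
  assert (Hmq : 0 < P (- (1/4))) by (rewrite P_opp; exact Hq).
  destruct (Z.Even_or_Odd i) as [[j Hj] | [j Hj]]; apply (f_equal IZR) in Hj;
    rewrite ?plus_IZR, mult_IZR in Hj; simpl in Hj; rewrite Hj.
  - destruct (a j) eqn:Ha; [exists 1, (1/4) | exists (-1), (- (1/4))];
      (split; [auto | split; [assumption |]]); intros s Hs;
      (split; [| lra]); replace (2 * IZR j / 2 + 1/4 + s) with (IZR j + (1/4 + s)) by field;
      rewrite traj_of_seq_loop, Ha by lra.
    + rewrite loop_pt_true_first by lra. rewrite !Rmult_1_l. reflexivity.
    + rewrite loop_pt_false_first by lra.
      replace (- (1/4) + -1 * s) with (- (1/4 + s)) by ring. rewrite P_opp. f_equal; ring.
  - destruct (a j) eqn:Ha; [exists (-1), (1/4) | exists 1, (- (1/4))];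
      (split; [auto | split; [assumption |]]); intros s Hs;
      (split; [| lra]); replace ((2 * IZR j + 1) / 2 + 1/4 + s) with (IZR j + (3/4 + s)) by field;
      rewrite traj_of_seq_loop, Ha by lra.
    + rewrite loop_pt_true_second by lra.
      replace (1/4 + -1 * s) with (1 - (3/4 + s)) by lra. f_equal; ring.
    + rewrite loop_pt_false_second by lra.
      replace (- (1/4) + 1 * s) with (3/4 + s - 1) by lra. f_equal; ring.
Qed.

Lemma traj_of_seq_global a : global_traj X2 Y2 (traj_of_seq a).
Proof.
  exists (fun i => IZR i / 2), (fun _ => traj_of_seq a).
  split; [| split; [| split; [| split; [| split]]]].
  - intros i. rewrite plus_IZR. simpl. lra.
  - intros M. exists (up (2 * M)). destruct (archimed (2 * M)). lra.
  - intros M. exists (- up (-2 * M))%Z. rewrite opp_IZR. destruct (archimed (-2 * M)). lra.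
  - intros i. exists (IZR i / 2 + 1/4). rewrite plus_IZR. simpl (IZR 1). split; [lra |].
    destruct (traj_of_seq_half_cell a i) as [sg [c [Hsg [Hc Hcell]]]].
    replace (traj_of_seq a (IZR i / 2 + 1/4))
      with ((fun s => traj_of_seq a (s + (IZR i / 2 + 1/4))) 0) by (f_equal; ring).
    apply (graph_local_traj sg c); [lra | assumption | assumption |].
    intros s Hs. replace (s + (IZR i / 2 + 1/4)) with (IZR i / 2 + 1/4 + s) by ring.
    apply Hcell. lra.
  - reflexivity.
  - reflexivity.
Qed.

Lemma traj_of_seq_Omega2 a : Omega2 (traj_of_seq a).
Proof. split; [apply traj_of_seq_global | rewrite traj_of_seq_0; exact Lambda2_origin]. Qed.

Lemma itin_traj_of_seq a : itin (traj_of_seq a) = a.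
Proof.
  apply functional_extensionality. intros j.
  pose proof (origin_traj_loops _ (traj_of_seq_Omega2 a) (traj_of_seq_0 a) j (1/2) ltac:(lra)) as H.
  rewrite traj_of_seq_loop in H by lra.
  destruct (a j), (itin (traj_of_seq a) j); [reflexivity | | | reflexivity];
    rewrite loop_pt_true_first, loop_pt_false_first in H by lra; injection H; lra.
Qed.

(** * The quotient and the conjugacy *)

Lemma rep0_spec (c : OmegaBar) : proj1_sig c (rep0 c) /\ rep0 c 0 = origin.
Proof.
  unfold rep0. apply epsilon_spec. destruct c as [S [g [Hg ->]]]. simpl.
  exists (traj_of_seq (itin g)). split; [split |].
  - apply traj_of_seq_Omega2.
  - apply itin_traj_of_seq.
  - apply traj_of_seq_0.
Qed.

Lemma class_Omega2 (c : OmegaBar) g : proj1_sig c g -> Omega2 g.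
Proof. destruct c as [S [g0 [Hg ->]]]. simpl. intros [H _]. exact H. Qed.

Definition itin_class (c : OmegaBar) : Z -> bool := itin (rep0 c).

Definition class_of_seq (a : Z -> bool) : OmegaBar :=
  exist _ (cls (traj_of_seq a))
    (ex_intro _ (traj_of_seq a) (conj (traj_of_seq_Omega2 a) eq_refl)).

Lemma itin_class_mem (c : OmegaBar) g : proj1_sig c g -> itin_class c = itin g.
Proof.
  unfold itin_class. destruct (rep0_spec c) as [Hrep _]. revert Hrep.
  destruct c as [S [g0 [Hg ->]]]. simpl. intros [_ H1] [_ H2]. congruence.
Qed.

Lemma class_of_seq_itin_class c : class_of_seq (itin_class c) = c.
Proof.
  apply eq_sig_hprop; [intros; apply proof_irrelevance |].
  destruct c as [S [g [Hg ->]]] eqn:Ec. simpl.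
  rewrite <- Ec, (itin_class_mem c g) by (rewrite Ec; simpl; split; auto).
  unfold cls. rewrite itin_traj_of_seq. reflexivity.
Qed.

Lemma itin_class_of_seq a : itin_class (class_of_seq a) = a.
Proof.
  rewrite (itin_class_mem (class_of_seq a) (traj_of_seq a)); [apply itin_traj_of_seq |].
  simpl. split; [apply traj_of_seq_Omega2 | reflexivity].
Qed.

Lemma global_traj_shift (X Y : vf) gamma (d : R) : global_traj X Y gamma ->
  global_traj X Y (fun t => gamma (t + d)).
Proof.
  intros [t [sigma [Hinc [Hup [Hdown [Hloc [Hj Heq]]]]]]].
  exists (fun i => t i - d), (fun i s => sigma i (s + d)).
  split; [| split; [| split; [| split; [| split]]]].
  - intros i. specialize (Hinc i). lra.
  - intros M. destruct (Hup (M + d)) as [i Hi]. exists i. lra.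
  - intros M. destruct (Hdown (M + d)) as [i Hi]. exists i. lra.
  - intros i. destruct (Hloc i) as [tau [Htau HL]]. exists (tau - d). split; [lra |].
    replace (fun s => sigma i (s + (tau - d) + d)) with (fun s => sigma i (s + tau))
      by (apply functional_extensionality; intros s; f_equal; ring).
    replace (tau - d + d) with tau by ring.
    replace (t i - d - (tau - d)) with (t i - tau) by ring.
    replace (t (i + 1)%Z - d - (tau - d)) with (t (i + 1)%Z - tau) by ring. exact HL.
  - intros i. simpl. replace (t (i + 1)%Z - d + d) with (t (i + 1)%Z) by ring. apply Hj.
  - intros i s Hs. apply Heq. lra.
Qed.

Lemma T1_Omega2 gamma : Omega2 gamma -> Omega2 (T1 gamma).
Proof.
  intros [Hg H0]. split; [apply global_traj_shift, Hg |].
  unfold T1. rewrite Rplus_0_l. exact (Lambda2_invariant gamma Hg H0 1).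
Qed.

Lemma itin_T1 gamma : itin (T1 gamma) = shift2 (itin gamma).
Proof.
  apply functional_extensionality. intros j. unfold itin, shift2, T1.
  rewrite plus_IZR. replace (IZR j + 1 / 2 + 1) with (IZR j + 1 + 1 / 2) by ring.
  reflexivity.
Qed.

Lemma itin_class_T1 (c : OmegaBar) gamma : proj1_sig c gamma ->
  exists c' : OmegaBar, proj1_sig c' (T1 gamma) /\ itin_class c' = shift2 (itin_class c).
Proof.
  intros Hm. exists (class_of_seq (shift2 (itin_class c))).
  split; [| apply itin_class_of_seq].
  simpl. split; [apply T1_Omega2, (class_Omega2 c), Hm |].
  rewrite itin_T1, itin_traj_of_seq, (itin_class_mem c gamma Hm). reflexivity.
Qed.

Lemma real_Glb_Rbar_bounds (E : R -> Prop) e m : E e -> (forall x, E x -> m <= x) ->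
  m <= real (Glb_Rbar E) <= e.
Proof.
  intros He Hm. destruct (Glb_Rbar_correct E) as [Hlb Hglb].
  specialize (Hlb e He).
  assert (Hm' : Rbar_le m (Glb_Rbar E)) by (apply Hglb; intros x Hx; apply Hm, Hx).
  destruct (Glb_Rbar E); simpl in *; [lra | contradiction ..].
Qed.

Lemma real_Lub_Rbar_bounds (E : R -> Prop) e M : E e -> (forall x, E x -> x <= M) ->
  e <= real (Lub_Rbar E) <= M.
Proof.
  intros He HM. destruct (Lub_Rbar_correct E) as [Hub Hlub].
  specialize (Hub e He).
  assert (HM' : Rbar_le (Lub_Rbar E) M) by (apply Hlub; intros x Hx; apply HM, Hx).
  destruct (Lub_Rbar E); simpl in *; [lra | contradiction ..].
Qed.

Lemma dpt_bounds p (B : pt -> Prop) b m : B b -> (forall b', B b' -> m <= dist2 p b') ->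
  m <= dpt p B <= dist2 p b.
Proof.
  intros Hb Hm. apply real_Glb_Rbar_bounds; [exists b; auto |].
  intros x [b' [Hb' ->]]. apply Hm, Hb'.
Qed.

Lemma hsemi_bounds (A B : pt -> Prop) a M : A a -> (forall a', A a' -> dpt a' B <= M) ->
  dpt a B <= hsemi A B <= M.
Proof.
  intros Ha HM. apply real_Lub_Rbar_bounds; [exists a; auto |].
  intros x [a' [Ha' ->]]. apply HM, Ha'.
Qed.

Lemma hsemi_bounded (A B : pt -> Prop) a b M : A a -> B b ->
  (forall p q, A p -> B q -> dist2 p q <= M) -> 0 <= hsemi A B <= M.
Proof.
  intros Ha Hb HM.
  assert (Hdpt : forall p, A p -> 0 <= dpt p B <= M).
  { intros p Hp. pose proof (dpt_bounds p B b 0 Hb (fun q _ => dist2_nonneg p q)).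
    pose proof (HM p b Hp Hb). lra. }
  pose proof (hsemi_bounds A B a M Ha (fun p Hp => proj2 (Hdpt p Hp))).
  pose proof (Hdpt a Ha). lra.
Qed.

Lemma dH_bounded (A B : pt -> Prop) a b M : A a -> B b ->
  (forall p q, A p -> B q -> dist2 p q <= M) -> 0 <= dH A B <= M.
Proof.
  intros Ha Hb HM. unfold dH.
  pose proof (hsemi_bounded A B a b M Ha Hb HM).
  pose proof (hsemi_bounded B A b a M Hb Ha (fun q p Hq Hp => ltac:(rewrite dist2_sym; auto))).
  unfold Rmax. destruct Rle_dec; lra.
Qed.

Lemma dH_refl (A : pt -> Prop) a : A a -> dH A A = 0.
Proof.
  intros Ha.
  assert (H0 : forall p, A p -> dpt p A <= 0).
  { intros p Hp. pose proof (dpt_bounds p A p 0 Hp (fun q _ => dist2_nonneg p q)) as Hb.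
    rewrite dist2_refl in Hb. lra. }
  pose proof (hsemi_bounds A A a 0 Ha H0).
  pose proof (dpt_bounds a A a 0 Ha (fun q _ => dist2_nonneg a q)).
  unfold dH. replace (hsemi A A) with 0 by lra. apply Rmax_left. lra.
Qed.

Lemma dH_ge (A B : pt -> Prop) a b m M : A a -> B b ->
  (forall p q, A p -> B q -> dist2 p q <= M) -> (forall q, B q -> m <= dist2 a q) ->
  m <= dH A B.
Proof.
  intros Ha Hb HM Hm. unfold dH. eapply Rle_trans; [| apply Rmax_l].
  assert (Hdpt : forall p, A p -> dpt p B <= M).
  { intros p Hp. pose proof (dpt_bounds p B b 0 Hb (fun q _ => dist2_nonneg p q)).
    pose proof (HM p b Hp Hb). lra. }
  pose proof (hsemi_bounds A B a M Ha Hdpt).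
  pose proof (dpt_bounds a B b m Hb Hm). lra.
Qed.

(** * Continuity with respect to [rho2] *)

Definition loop_set (b : bool) (p : pt) : Prop := exists u, 0 <= u <= 1 /\ p = loop_pt b u.

Lemma img_origin_traj gamma (i : Z) : Omega2 gamma -> gamma 0 = origin ->
  img gamma i = loop_set (itin gamma i).
Proof.
  intros HO H0. apply functional_extensionality. intros p. apply propositional_extensionality.
  split.
  - intros [s [Hs ->]]. exists (s - IZR i). split; [lra |].
    rewrite <- (origin_traj_loops gamma HO H0 i) by lra. f_equal. ring.
  - intros [u [Hu ->]]. exists (IZR i + u). split; [lra |].
    rewrite (origin_traj_loops gamma HO H0 i); auto.
Qed.

Lemma dterm_loop_set c1 c2 i :
  dterm c1 c2 i = dH (loop_set (itin_class c1 i)) (loop_set (itin_class c2 i)).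
Proof.
  unfold dterm, itin_class. destruct (rep0_spec c1) as [M1 O1]. destruct (rep0_spec c2) as [M2 O2].
  rewrite !img_origin_traj; auto; eapply class_Omega2; eassumption.
Qed.

Lemma loop_set_0 b : loop_set b origin.
Proof. exists 0. split; [lra | symmetry; apply loop_pt_0]. Qed.

Lemma loop_set_bounds b p : loop_set b p -> -1/2 <= fst p <= 1/2 /\ -1 <= snd p <= 1.
Proof.
  intros [u [Hu ->]].
  destruct b, (Rle_dec u (1/2));
    [rewrite loop_pt_true_first | rewrite loop_pt_true_second |
     rewrite loop_pt_false_first | rewrite loop_pt_false_second]; try lra; cbn [fst snd];
    match goal with |- context [P ?x] =>
      pose proof (proj2 (P_ge0_iff x) ltac:(lra)); pose proof (P_le1 x ltac:(lra)) end;
    lra.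
Qed.

Lemma loop_set_dist2 b1 b2 p q : loop_set b1 p -> loop_set b2 q -> dist2 p q <= 3.
Proof.
  intros Hp Hq. destruct (loop_set_bounds _ _ Hp), (loop_set_bounds _ _ Hq).
  eapply Rle_trans; [apply dist2_le_Rabs | split_Rabs; lra].
Qed.

Lemma loop_set_sign b p : loop_set b p -> if b then 0 <= fst p else fst p <= 0.
Proof.
  intros [u [Hu ->]].
  destruct b, (Rle_dec u (1/2));
    [rewrite loop_pt_true_first | rewrite loop_pt_true_second |
     rewrite loop_pt_false_first | rewrite loop_pt_false_second]; simpl; lra.
Qed.

Lemma dH_loop_set_bounds b1 b2 : 0 <= dH (loop_set b1) (loop_set b2) <= 3.
Proof. apply (dH_bounded _ _ origin origin); [apply loop_set_0 .. | apply loop_set_dist2]. Qed.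

(* The outermost point of one loop, at [x = 1/2] or [x = -1/2], is at distance at least
   [1/2] from the other loop. *)
Lemma dH_loop_set_neq b1 b2 : b1 <> b2 -> 1/2 <= dH (loop_set b1) (loop_set b2).
Proof.
  intros Hne. apply (dH_ge _ _ (loop_pt b1 (1/2)) origin _ 3);
    [exists (1/2); split; [lra | reflexivity] | apply loop_set_0 | apply loop_set_dist2 |].
  intros q Hq. eapply Rle_trans; [| apply Rabs_fst_le_dist2].
  apply loop_set_sign in Hq.
  destruct b1, b2; try congruence.
  - rewrite loop_pt_true_first by lra. simpl in *. rewrite Rabs_pos_eq; lra.
  - rewrite loop_pt_false_first by lra. simpl in *. rewrite Rabs_left; lra.
Qed.

Lemma dterm_bounds c1 c2 i : 0 <= dterm c1 c2 i <= 3.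
Proof. rewrite dterm_loop_set. apply dH_loop_set_bounds. Qed.

Lemma half_pow_bounds n : 0 < (/2) ^ n <= 1.
Proof. induction n; simpl; [lra |]. split; [apply Rmult_lt_0_compat; lra | nra]. Qed.

Lemma half_pow_le m n : (m <= n)%nat -> (/2) ^ n <= (/2) ^ m.
Proof.
  intros H. replace n with (m + (n - m))%nat by lia. rewrite pow_add.
  pose proof (half_pow_bounds m). pose proof (half_pow_bounds (n - m)). nra.
Qed.

Lemma ex_series_half_pow_dom (a : nat -> R) C : (forall n, 0 <= a n <= C * (/2) ^ n) ->
  ex_series a.
Proof.
  intros H. apply (ex_series_le a (fun n => C * (/2) ^ n)).
  - intros n. change (norm (a n)) with (Rabs (a n)). rewrite Rabs_pos_eq; apply H.
  - apply (ex_series_scal_l C (fun n => (/2) ^ n)). apply ex_series_geom.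
    rewrite Rabs_pos_eq; lra.
Qed.

Lemma Series_nonneg (a : nat -> R) : ex_series a -> (forall n, 0 <= a n) -> 0 <= Series a.
Proof.
  intros He H. assert (E : Series (fun n => 0 * a n) = 0) by (rewrite Series_scal_l; ring).
  rewrite <- E. apply Series_le; [| exact He]. intros n. rewrite Rmult_0_l. auto with real.
Qed.

Lemma Series_ge_term k (a : nat -> R) : ex_series a -> (forall n, 0 <= a n) -> a k <= Series a.
Proof.
  revert a. induction k as [| k IH]; intros a He H; rewrite Series_incr_1 by exact He;
    pose proof (proj1 (ex_series_incr_1 a) He) as He1.
  - pose proof (Series_nonneg (fun k => a (S k)) He1 (fun n => H (S n))). lra.
  - pose proof (IH (fun k => a (S k)) He1 (fun n => H (S n))). pose proof (H 0%nat). lra.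
Qed.

Lemma Series_half_pow_tail M (a : nat -> R) C : (forall n, 0 <= a n <= C * (/2) ^ n) ->
  (forall n, (n < M)%nat -> a n = 0) -> Series a <= 2 * C * (/2) ^ M.
Proof.
  revert a C. induction M as [| M IH]; intros a C H Hz.
  - rewrite pow_O, Rmult_1_r.
    replace (2 * C) with (Series (fun n => C * (/2) ^ n))
      by (rewrite Series_scal_l, Series_geom by (rewrite Rabs_pos_eq; lra); field).
    apply Series_le; [exact H |].
    apply (ex_series_scal_l C (fun n => (/2) ^ n)), ex_series_geom. rewrite Rabs_pos_eq; lra.
  - rewrite Series_incr_1 by (apply (ex_series_half_pow_dom a C H)).
    rewrite Hz, Rplus_0_l by lia.
    replace (2 * C * (/2) ^ S M) with (2 * (C * /2) * (/2) ^ M) by (simpl; ring).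
    apply IH; [| intros n Hn; apply Hz; lia].
    intros n. specialize (H (S n)). simpl in H. lra.
Qed.

Definition rho2_pos_term c1 c2 n := (/2) ^ n * dterm c1 c2 (Z.of_nat n).
Definition rho2_neg_term c1 c2 n := (/2) ^ (S n) * dterm c1 c2 (- Z.of_nat (S n)).

Lemma rho2_pos_term_bounds c1 c2 n : 0 <= rho2_pos_term c1 c2 n <= 3 * (/2) ^ n.
Proof.
  unfold rho2_pos_term. pose proof (dterm_bounds c1 c2 (Z.of_nat n)).
  pose proof (half_pow_bounds n). nra.
Qed.

Lemma rho2_neg_term_bounds c1 c2 n : 0 <= rho2_neg_term c1 c2 n <= 3 * (/2) ^ n.
Proof.
  unfold rho2_neg_term. pose proof (dterm_bounds c1 c2 (- Z.of_nat (S n))).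
  pose proof (half_pow_bounds (S n)). pose proof (half_pow_le n (S n) ltac:(lia)). nra.
Qed.

Lemma rho2_split c1 c2 : rho2 c1 c2 = Series (rho2_pos_term c1 c2) + Series (rho2_neg_term c1 c2).
Proof. reflexivity. Qed.

Lemma rho2_ge_disagreement c1 c2 (j : Z) (N : nat) : (Z.abs j <= Z.of_nat N)%Z ->
  itin_class c1 j <> itin_class c2 j -> (/2) ^ N * / 2 <= rho2 c1 c2.
Proof.
  intros Hj Hne. rewrite rho2_split.
  pose proof (ex_series_half_pow_dom _ _ (rho2_pos_term_bounds c1 c2)) as E1.
  pose proof (ex_series_half_pow_dom _ _ (rho2_neg_term_bounds c1 c2)) as E2.
  pose proof (Series_nonneg _ E1 (fun n => proj1 (rho2_pos_term_bounds c1 c2 n))).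
  pose proof (Series_nonneg _ E2 (fun n => proj1 (rho2_neg_term_bounds c1 c2 n))).
  assert (Hd : 1/2 <= dterm c1 c2 j) by (rewrite dterm_loop_set; apply dH_loop_set_neq, Hne).
  pose proof (half_pow_bounds N).
  destruct (Z_le_dec 0 j) as [Hj0 | Hj0].
  - pose proof (Series_ge_term (Z.to_nat j) _ E1 (fun n => proj1 (rho2_pos_term_bounds c1 c2 n))).
    unfold rho2_pos_term in *. rewrite Z2Nat.id in * by exact Hj0.
    pose proof (half_pow_le (Z.to_nat j) N ltac:(lia)).
    assert ((/2) ^ N * / 2 <= (/2) ^ Z.to_nat j * dterm c1 c2 j)
      by (apply Rmult_le_compat; lra). lra.
  - pose proof (Series_ge_term (Z.to_nat (- j) - 1) _ E2
                  (fun n => proj1 (rho2_neg_term_bounds c1 c2 n))).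
    unfold rho2_neg_term in *.
    replace (- Z.of_nat (S (Z.to_nat (- j) - 1)))%Z with j in * by lia.
    pose proof (half_pow_le (S (Z.to_nat (- j) - 1)) N ltac:(lia)).
    assert ((/2) ^ N * / 2 <= (/2) ^ S (Z.to_nat (- j) - 1) * dterm c1 c2 j)
      by (apply Rmult_le_compat; lra). lra.
Qed.

Lemma rho2_le_agreement c1 c2 (N : nat) :
  (forall j, (Z.abs j <= Z.of_nat N)%Z -> itin_class c1 j = itin_class c2 j) ->
  rho2 c1 c2 <= 9 * (/2) ^ N.
Proof.
  intros Hagree.
  assert (Hz : forall j, (Z.abs j <= Z.of_nat N)%Z -> dterm c1 c2 j = 0).
  { intros j Hj. rewrite dterm_loop_set, Hagree by exact Hj. apply (dH_refl _ origin), loop_set_0. }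
  rewrite rho2_split.
  assert (S1 : Series (rho2_pos_term c1 c2) <= 2 * 3 * (/2) ^ S N).
  { apply Series_half_pow_tail; [apply rho2_pos_term_bounds |].
    intros n Hn. unfold rho2_pos_term. rewrite Hz by lia. ring. }
  assert (S2 : Series (rho2_neg_term c1 c2) <= 2 * 3 * (/2) ^ N).
  { apply Series_half_pow_tail; [apply rho2_neg_term_bounds |].
    intros n Hn. unfold rho2_neg_term. rewrite Hz by lia. ring. }
  simpl in S1. lra.
Qed.

Lemma itin_class_continuous : cont_to_seq itin_class.
Proof.
  intros c N. exists ((/2) ^ N * / 2). split; [pose proof (half_pow_bounds N); nra |].
  intros c' Hr j Hj. destruct (Bool.bool_dec (itin_class c' j) (itin_class c j)) as [E | E];
    [exact E |].
  pose proof (rho2_ge_disagreement c c' j N Hj (not_eq_sym E)). lra.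
Qed.

Lemma class_of_seq_continuous : cont_from_seq class_of_seq.
Proof.
  intros a eps Heps.
  destruct (pow_lt_1_zero (/2) ltac:(rewrite Rabs_pos_eq; lra) (eps / 10) ltac:(lra)) as [N HN].
  exists N. intros b Hb. specialize (HN N (le_n N)).
  rewrite Rabs_pos_eq in HN by (apply Rlt_le, half_pow_bounds).
  assert (rho2 (class_of_seq a) (class_of_seq b) <= 9 * (/2) ^ N); [| lra].
  apply rho2_le_agreement. intros j Hj. rewrite !itin_class_of_seq. symmetry. apply Hb, Hj.
Qed.

Theorem theoremA :
  compact2 Lambda2 /\ invariant X2 Y2 Lambda2 /\
  exists h : OmegaBar -> Z -> bool,
    homeomorphism h /\
    (forall (c : OmegaBar) (gamma : R -> pt), proj1_sig c gamma ->
       exists c' : OmegaBar, proj1_sig c' (T1 gamma) /\ h c' = shift2 (h c)).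
Proof.
  split; [exact compact_Lambda2 |]. split; [exact Lambda2_invariant |].
  exists itin_class. split; [| exact itin_class_T1].
  exists class_of_seq. split; [exact class_of_seq_itin_class |].
  split; [exact itin_class_of_seq |].
  split; [exact itin_class_continuous | exact class_of_seq_continuous].
Qed.
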